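(* Let $h$ be a fixed-point-free isometry of order $3$ of the $E_8$ root lattice. In $E_8\perp E_8$ let $M=\{(x,x):x\in E_8\}$ and $M'=\{(hx,x):x\in E_8\}$. Then $M+M'$ contains no vectors of norm $2$ (it is rootless). *)

From mathcomp Require Import all_boot all_order all_algebra.
Set Implicit Arguments. Unset Strict Implicit. Unset Printing Implicit Defensive.
Import Order.TTheory GRing.Theory Num.Theory.
Local Open Scope ring_scope.

Definition dot8 (x y : 'rV[rat]_8) : rat := \sum_(i < 8) x 0 i * y 0 i.
Definition norm8 (x : 'rV[rat]_8) : rat := dot8 x x.

(* The E8 root lattice (standard coordinates): all coordinates integers or
   all coordinates in Z + 1/2, with even coordinate sum. Roots have norm 2. *)
Definition E8 (x : 'rV[rat]_8) : Prop :=
  ((forall i, x 0 i \is a Num.int) \/ (forall i, x 0 i - 2^-1 \is a Num.int))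
  /\ (2^-1 * \sum_(i < 8) x 0 i) \is a Num.int.

(* An isometry of E8, acting on row vectors by x |-> x *m H:
   H is orthogonal (preserves the inner product) and maps E8 into E8
   (hence onto, as H is invertible with H^-1 = H^T). *)
Definition E8_isometry (H : 'M[rat]_8) : Prop :=
  H *m H^T = 1%:M /\ (forall x, E8 x -> E8 (x *m H)).

Definition order3 (H : 'M[rat]_8) : Prop := H ^+ 3 = 1 /\ H != 1.

Definition fixed_point_free (H : 'M[rat]_8) : Prop :=
  forall x, E8 x -> x *m H = x -> x = 0.

Definition norm88 (v : 'rV[rat]_8 * 'rV[rat]_8) : rat := norm8 v.1 + norm8 v.2.

Definition Mdiag (v : 'rV[rat]_8 * 'rV[rat]_8) : Prop :=
  exists x, E8 x /\ v = (x, x).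
Definition Mtwist (H : 'M[rat]_8) (v : 'rV[rat]_8 * 'rV[rat]_8) : Prop :=
  exists x, E8 x /\ v = (x *m H, x).

Definition lat_sum (A B : 'rV[rat]_8 * 'rV[rat]_8 -> Prop) v : Prop :=
  exists a b, A a /\ B b /\ v = (a.1 + b.1, a.2 + b.2).

Definition rootless (L : 'rV[rat]_8 * 'rV[rat]_8 -> Prop) : Prop :=
  forall v, L v -> norm88 v <> 2.

(* Write v = (x + y h, x + y) with x, y in E8.  Both coordinates lie in the even
   lattice E8, so norm 2 forces one of them to vanish and the other to have norm
   2; then y h - y, their difference, has norm 2.  On the other hand
   y + y h + y h^2 is fixed by h, hence 0, which gives (y h, y) = -(y, y)/2 and
   so |y h - y|^2 = 3 |y|^2 is divisible by 6: a contradiction. *)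
From mathcomp Require Import all_boot all_order all_algebra.
From mathcomp Require Import zify ring lra.
Import Order.TTheory GRing.Theory Num.Theory.
Local Open Scope ring_scope.

Lemma dot8C x y : dot8 x y = dot8 y x.
Proof. by apply: eq_bigr => i _; rewrite mulrC. Qed.

Lemma dot8Dl x y z : dot8 (x + y) z = dot8 x z + dot8 y z.
Proof. by rewrite /dot8 -big_split; apply: eq_bigr => i _; rewrite mxE mulrDl. Qed.

Lemma dot8Nl x z : dot8 (- x) z = - dot8 x z.
Proof. by rewrite /dot8 -sumrN; apply: eq_bigr => i _; rewrite mxE mulNr. Qed.

Lemma dot8Dr x y z : dot8 z (x + y) = dot8 z x + dot8 z y.
Proof. by rewrite dot8C dot8Dl !(dot8C z). Qed.

Lemma dot8Nr x z : dot8 z (- x) = - dot8 z x.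
Proof. by rewrite dot8C dot8Nl dot8C. Qed.

Lemma dot80l x : dot8 0 x = 0.
Proof. by rewrite /dot8 big1 // => i _; rewrite mxE mul0r. Qed.

Lemma norm8B x y : norm8 (x - y) = norm8 x + norm8 y - 2 * dot8 x y.
Proof.
rewrite /norm8 dot8Dl dot8Nl !dot8Dr !dot8Nr (dot8C y x); ring.
Qed.

Lemma dot8_mxE x y : dot8 x y = (x *m y^T) 0 0.
Proof. by rewrite mxE; apply: eq_bigr => i _; rewrite mxE. Qed.

Lemma dot8_orthogonal (H : 'M[rat]_8) x y :
  H *m H^T = 1%:M -> dot8 (x *m H) (y *m H) = dot8 x y.
Proof. by move=> HH; rewrite !dot8_mxE trmx_mul mulmxA -(mulmxA x) HH mulmx1. Qed.

Lemma norm8_ge0 x : 0 <= norm8 x.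
Proof. by apply: sumr_ge0 => i _; rewrite -expr2 sqr_ge0. Qed.

Lemma norm8_eq0 x : norm8 x = 0 -> x = 0.
Proof.
move=> x0; apply/rowP => i; rewrite mxE; apply/eqP; rewrite -sqrf_eq0; apply/eqP.
have sq0 : \sum_(j < 8) x 0 j ^+ 2 = 0.
  by rewrite -[RHS]x0; apply: eq_bigr => j _; rewrite expr2.
exact: (@psumr_eq0P _ _ xpredT _ (fun j _ => sqr_ge0 (x 0 j)) sq0 i isT).
Qed.

Lemma E8D x y : E8 x -> E8 y -> E8 (x + y).
Proof.
move=> [hx sx] [hy sy]; split; last first.
  rewrite (eq_bigr (fun i => x 0 i + y 0 i)) => [|i _]; last by rewrite mxE.
  by rewrite big_split mulrDr rpredD.
case: hx => hx; case: hy => hy.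
- by left => i; rewrite mxE rpredD.
- by right => i; rewrite mxE -addrA rpredD.
- by right => i; rewrite mxE addrAC rpredD.
- left => i; rewrite mxE.
  have -> : x 0 i + y 0 i = (x 0 i - 2^-1) + (y 0 i - 2^-1) + 1 by field.
  by rewrite rpredD ?rpred1 // rpredD.
Qed.

Lemma int_half_mul_succ (R : archiNumFieldType) (r : R) :
  r \is a Num.int -> 2^-1 * (r * (r + 1)) \is a Num.int.
Proof.
move=> /intrP [z ->].
have [k zk] : exists k : int, z * (z + 1) = 2 * k.
  have [m [->|->]] : exists m, z = m * 2 \/ z = m * 2 + 1.
    have two0 : (2 : int) != 0 by [].
    exists (z %/ 2)%Z; have := divz_eq z 2; have := modz_ge0 z two0.
    have := ltz_mod z two0; lia.
  - by exists (m * (2 * m + 1)); ring.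
  - by exists ((2 * m + 1) * (m + 1)); ring.
have -> : z%:~R * (z%:~R + 1) = (z * (z + 1))%:~R :> R by rewrite rmorphM rmorphD.
by rewrite zk rmorphM /= mulrA mulVf ?mul1r ?rpred_int ?pnatr_eq0.
Qed.

Lemma E8_norm_half_int x : E8 x -> 2^-1 * norm8 x \is a Num.int.
Proof.
move=> [[hx|hx] sx].
- have -> : 2^-1 * norm8 x =
     \sum_(i < 8) 2^-1 * ((x 0 i - 1) * (x 0 i - 1 + 1)) + 2^-1 * \sum_(i < 8) x 0 i.
    rewrite -mulr_sumr -mulrDr -big_split /=; congr (_ * _).
    by apply: eq_bigr => i _; ring.
  by rewrite rpredD // rpred_sum // => i _; rewrite int_half_mul_succ ?rpredB.
- have -> : 2^-1 * norm8 x =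
     \sum_(i < 8) (2^-1 * ((x 0 i - 2^-1) * (x 0 i - 2^-1 + 1)) + 2^-1 * 4^-1).
    by rewrite /norm8 /dot8 mulr_sumr; apply: eq_bigr => i _; field.
  rewrite big_split /= sumr_const card_ord.
  have -> : (2^-1 * 4^-1 : rat) *+ 8 = 1 by apply/eqP.
  by rewrite rpredD ?rpred1 // rpred_sum // => i _; rewrite int_half_mul_succ.
Qed.

Lemma E8_norm_even x : E8 x -> exists n : nat, norm8 x = n.*2%:R.
Proof.
move=> Ex; have /natrP [n hn] : 2^-1 * norm8 x \is a Num.nat.
  by rewrite natrEint E8_norm_half_int // mulr_ge0 ?norm8_ge0.
by exists n; rewrite -muln2 natrM -hn mulrAC mulVf ?mul1r.
Qed.

Lemma E8_norm_sub_of_normD x y :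
  E8 x -> E8 y -> norm8 x + norm8 y = 2 -> norm8 (x - y) = 2.
Proof.
move=> /E8_norm_even [m xm] /E8_norm_even [n yn].
rewrite xm yn -natrD -[2]/(2%:R) => /eqP; rewrite eqr_nat => /eqP mn.
have [[m0 n1]|[m1 n0]] : (m = 0 /\ n = 1 \/ m = 1 /\ n = 0)%N by lia.
- have -> : x = 0 by apply: norm8_eq0; rewrite xm m0.
  by rewrite norm8B /norm8 !dot80l -/(norm8 y) yn n1 mulr0 subr0 add0r.
- have -> : y = 0 by apply: norm8_eq0; rewrite yn n0.
  by rewrite subr0 xm m1.
Qed.

Section FixedPointFreeOrder3.

Variable H : 'M[rat]_8.
Hypotheses (HHT : H *m H^T = 1%:M) (E8H : forall x, E8 x -> E8 (x *m H)).
Hypotheses (H3 : H ^+ 3 = 1) (H_fpf : fixed_point_free H).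

Lemma mulmx_cube : H *m (H *m H) = 1%:M.
Proof. by rewrite !mulmxE -[RHS]/(1 : 'M_8) -H3 !exprS expr0 mulr1. Qed.

Lemma E8_orbit_sum0 y : E8 y -> y + y *m H + y *m H *m H = 0.
Proof.
move=> Ey; apply: H_fpf; first by do ![apply: E8D | apply: E8H].
by rewrite !mulmxDl -!mulmxA mulmx_cube mulmx1 addrC addrA.
Qed.

Lemma dot8_orbit y : E8 y -> dot8 (y *m H) y = - 2^-1 * norm8 y.
Proof.
move=> Ey; have := congr1 (dot8^~ y) (E8_orbit_sum0 _ Ey); rewrite !dot8Dl dot80l.
have -> : dot8 (y *m H *m H) y = dot8 (y *m H) y.
  by rewrite -(dot8_orthogonal _ _ _ HHT) -!mulmxA mulmx_cube mulmx1 dot8C.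
rewrite /norm8; lra.
Qed.

Lemma norm8_mulmx_sub y : E8 y -> norm8 (y *m H - y) = 3 * norm8 y.
Proof.
move=> Ey; rewrite norm8B dot8_orbit //.
by rewrite /norm8 dot8_orthogonal // -/(norm8 y); lra.
Qed.

End FixedPointFreeOrder3.

Theorem lemma2p6 (H : 'M[rat]_8) :
  E8_isometry H -> order3 H -> fixed_point_free H ->
  rootless (lat_sum Mdiag (Mtwist H)).
Proof.
move=> [HHT E8H] [H3 _] H_fpf _ [_ [_ [[x [Ex ->]] [[y [Ey ->]] ->]]]].
rewrite /norm88 /= => v2.
have diff2 : norm8 (y *m H - y) = 2.
  have -> : y *m H - y = (x + y *m H) - (x + y) by rewrite opprD addrACA subrr add0r.
  by apply: E8_norm_sub_of_normD => //; apply: E8D => //; apply: E8H.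
have [n yn] := E8_norm_even _ Ey.
move: diff2; rewrite norm8_mulmx_sub // yn -natrM -[2]/(2%:R) => /eqP.
by rewrite eqr_nat; lia.
Qed.
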